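(* Let $k$ be an algebraically closed field of characteristic zero, $n\ge1$, $q\in k$ a primitive $2n$-th root of unity, $a\in k\setminus\{0\}$. Let $\mathfrak wH_{4n}$ be the weak Hopf algebra generated by $Z,X$ with $Z^{2n+1}=Z$, $ZX=qXZ$, $X^2=0$, $\Delta(Z)=Z\otimes Z+a(1-q^{-2})Z^{n+1}X\otimes ZX$, $\Delta(X)=X\otimes 1+Z^n\otimes X$, $\epsilon(Z)=1$, $\epsilon(X)=0$, $T(Z)=Z^{2n-1}$, $T(X)=-Z^nX$. Let $H_{4n}$ be the Hopf algebra generated by $z,x$ with $z^{2n}=1$, $zx=qxz$, $x^2=0$, $\Delta(z)=z\otimes z+a(1-q^{-2})z^{n+1}x\otimes zx$, $\Delta(x)=x\otimes 1+z^n\otimes x$, $\epsilon(z)=1$, $\epsilon(x)=0$, $S(z)=z^{-1}$, $S(x)=-z^nx$. Let $J=Z^{2n}$, $\mathfrak w_1=\mathfrak wH_{4n}J$ and $\mathfrak w_2=\mathfrak wH_{4n}(1-J)$. Then $\mathfrak wH_{4n}=\mathfrak w_1\oplus\mathfrak w_2$ as a direct sum of two-sided ideals; moreover $\mathfrak w_1$ (with unit $J$, and with the comultiplication and counit restricted from $\mathfrak wH_{4n}$ and antipode $Z\mapsto Z^{2n-1}$, $XJ\mapsto -Z^nXJ$) is isomorphic to $H_{4n}$ as Hopf algebras, and $\mathfrak w_2\cong k[y]/(y^2)$ as algebras. *)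

From HB Require Import structures.
From mathcomp Require Import all_boot all_order all_algebra.
Set Implicit Arguments. Unset Strict Implicit. Unset Printing Implicit Defensive.
Import Order.TTheory GRing.Theory Num.Theory.
Local Open Scope ring_scope.

Notation vect k I := {ffun I -> k^o}.
Section StructConst.
Variable k : fieldType.



Definition linext (I J : finType) (F : I -> vect k J) (f : vect k I) : vect k J :=
  \sum_(i : I) f i *: F i.

Definition bilin (I : finType) (m : I -> I -> vect k I) (f g : vect k I) : vect k I :=
  \sum_(i : I) \sum_(j : I) (f i * g j) *: m i j.

(* elementary tensor f (x) g in V (x) W = functions on I * J *)
Definition tens (I J : finType) (f : vect k I) (g : vect k J) : vect k (I * J) :=
  [ffun p => f p.1 * g p.2].

Definition tmap (I J : finType) (phi : vect k I -> vect k J) (t : vect k (I * I)) :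
  vect k (J * J) :=
  \sum_(p : I * I) t p *: tens (phi [ffun i => (i == p.1)%:R])
                                (phi [ffun i => (i == p.2)%:R]).

Variables (I : finType) (m : I -> I -> vect k I) (one : vect k I).

Definition amul := bilin m.
Definition apow (f : vect k I) (e : nat) : vect k I := iter e (amul f) one.

Definition tmul := bilin (fun i j : I * I => tens (m i.1 j.1) (m i.2 j.2)).
Definition tone := tens one one.
Definition tpow (t : vect k (I * I)) (e : nat) : vect k (I * I) := iter e (tmul t) tone.
End StructConst.

(* ---------- the weak Hopf algebra wH_{4n} ----------
   basis: Z^i X^b, 0 <= i <= 2n, b in {0,1}  (Z^0 = 1) *)
Section wH.
Variables (k : fieldType) (n : nat) (q a : k).

Definition WI := ('I_(2 * n).+1 * bool)%type.

(* reduction of exponents of Z using Z^(2n+1) = Z *)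
Definition redW (m : nat) : nat := if m == 0%N then 0%N else ((m.-1 %% (2 * n)).+1)%N.

Definition monW (m : nat) (b : bool) : vect k WI :=
  [ffun p : WI => (((p.1 : nat) == redW m) && (p.2 == b))%:R].

(* (Z^i X^b)(Z^j X^c) = q^{-bj} Z^{i+j} X^{b+c}  (using XZ = q^{-1} ZX, X^2 = 0) *)
Definition multW (i j : WI) : vect k WI :=
  if i.2 && j.2 then 0 else (q ^- (i.2 * j.1)%N) *: monW (i.1 + j.1) (i.2 || j.2).

Definition oneW := monW 0 false.
Definition mulW := amul multW.
Definition powW := apow multW oneW.
Definition ZW := monW 1 false.
Definition XW := monW 0 true.
Definition tmulW := tmul multW.
Definition tpowW := tpow multW oneW.

Definition DZW : vect k (WI * WI) :=
  tens ZW ZW + (a * (1 - q ^- 2)) *: tens (mulW (powW ZW n.+1) XW) (mulW ZW XW).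
Definition DXW : vect k (WI * WI) := tens XW oneW + tens (powW ZW n) XW.
(* Delta is the algebra map determined by Delta(Z), Delta(X) *)
Definition DeltaW : vect k WI -> vect k (WI * WI) :=
  linext (fun i : WI => tmulW (tpowW DZW i.1) (tpowW DXW i.2)).
(* epsilon is the algebra map with epsilon(Z) = 1, epsilon(X) = 0 *)
Definition epsW (f : vect k WI) : k := \sum_(i : WI) f i * (~~ i.2)%:R.
(* T is the anti-algebra map with T(Z) = Z^(2n-1), T(X) = - Z^n X *)
Definition TZW := powW ZW (2 * n).-1.
Definition TXW := - mulW (powW ZW n) XW.
Definition TW : vect k WI -> vect k WI :=
  linext (fun i : WI => mulW (powW TXW i.2) (powW TZW i.1)).

Definition JW := powW ZW (2 * n).
Definition w1 (v : vect k WI) : Prop := exists w, v = mulW w JW.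
Definition w2 (v : vect k WI) : Prop := exists w, v = mulW w (oneW - JW).

Definition is_ideal (P : vect k WI -> Prop) : Prop :=
  [/\ P 0, (forall u v, P u -> P v -> P (u + v)),
      (forall (c : k) v, P v -> P (c *: v)) &
      (forall u v, P v -> P (mulW u v) /\ P (mulW v u))].
End wH.

(* ---------- the Hopf algebra H_{4n} ----------
   basis: z^i x^b, 0 <= i < 2n, b in {0,1} *)
Section H.
Variables (k : fieldType) (n : nat) (q a : k).

Definition HI := ('I_(2 * n) * bool)%type.

(* the monomial z^m x^b, using z^(2n) = 1 *)
Definition monH (m : nat) (b : bool) : vect k HI :=
  [ffun p : HI => (((p.1 : nat) == (m %% (2 * n))%N) && (p.2 == b))%:R].

Definition multH (i j : HI) : vect k HI :=
  if i.2 && j.2 then 0 else (q ^- (i.2 * j.1)%N) *: monH (i.1 + j.1) (i.2 || j.2).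

Definition oneH := monH 0 false.
Definition mulH := amul multH.
Definition powH := apow multH oneH.
Definition zH := monH 1 false.
Definition xH := monH 0 true.
Definition tmulH := tmul multH.
Definition tpowH := tpow multH oneH.

Definition DzH : vect k (HI * HI) :=
  tens zH zH + (a * (1 - q ^- 2)) *: tens (mulH (powH zH n.+1) xH) (mulH zH xH).
Definition DxH : vect k (HI * HI) := tens xH oneH + tens (powH zH n) xH.
Definition DeltaH : vect k HI -> vect k (HI * HI) :=
  linext (fun i : HI => tmulH (tpowH DzH i.1) (tpowH DxH i.2)).
Definition epsH (f : vect k HI) : k := \sum_(i : HI) f i * (~~ i.2)%:R.
(* S is the anti-algebra map with S(z) = z^{-1} = z^(2n-1), S(x) = - z^n x *)
Definition SzH := powH zH (2 * n).-1.
Definition SxH := - mulH (powH zH n) xH.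
Definition SH : vect k HI -> vect k HI :=
  linext (fun i : HI => mulH (powH SxH i.2) (powH SzH i.1)).
End H.

(* In wH_{4n} the
   relation Z^(2n+1) = Z makes the exponent of Z matter only modulo 2n once it is
   positive, so J = Z^(2n) is a central idempotent and wH_{4n} splits as
   wH_{4n} J (+) wH_{4n} (1 - J).  The linear map z^i x^b |-> Z^(i+2n) X^b = Z^i X^b J
   is a bijection onto wH_{4n} J; the comultiplication, counit and antipode have
   closed forms on monomials in which exponents only matter modulo 2n, so the map
   commutes with all of them.  The complement wH_{4n} (1 - J) has basis 1 - J and
   Y = X (1 - J), with Y^2 = 0, which gives k[y]/(y^2). *)

From HB Require Import structures.
From mathcomp Require Import all_boot all_order all_algebra.
From mathcomp Require Import ring zify.
Set Implicit Arguments. Unset Strict Implicit. Unset Printing Implicit Defensive.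
Import GRing.Theory.
Local Open Scope ring_scope.

Section Coordinates.
Variables (k : fieldType) (I J : finType).

Definition delta_vec (i : I) : vect k I := [ffun x => (x == i)%:R].

Lemma sum_delta_scale (V : lmodType k) (G : I -> V) i :
  \sum_j ((j == i)%:R : k) *: G j = G i.
Proof.
rewrite (bigD1 i) //= eqxx scale1r big1 ?addr0 // => j /negbTE ->.
by rewrite scale0r.
Qed.

Lemma vect_delta_expand (f : vect k I) : f = \sum_i f i *: delta_vec i.
Proof.
apply/ffunP => x; rewrite sum_ffunE -[LHS](sum_delta_scale (fun i => f i : k^o) x).
by apply: eq_bigr => i _; rewrite !ffunE eq_sym; apply: mulrC.
Qed.

Lemma eq_linear_delta (V : lmodType k) (A B : {linear vect k I -> V}) :
  (forall i, A (delta_vec i) = B (delta_vec i)) -> A =1 B.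
Proof.
move=> AB f; rewrite (vect_delta_expand f) !linear_sum.
by apply: eq_bigr => i _; rewrite !linearZ AB.
Qed.

Lemma linext_is_linear (F : I -> vect k J) : linear (linext F).
Proof.
move=> c f g; rewrite /linext scaler_sumr -big_split; apply: eq_bigr => i _ /=.
by rewrite !ffunE scalerDl scalerA.
Qed.
HB.instance Definition _ F :=
  GRing.isLinear.Build k (vect k I) (vect k J) _ (linext F) (linext_is_linear F).

Lemma linext_delta (F : I -> vect k J) i : linext F (delta_vec i) = F i.
Proof.
rewrite /linext -[RHS](sum_delta_scale F i); apply: eq_bigr => j _.
by rewrite ffunE.
Qed.

Lemma bilin_is_bilinear (m : I -> I -> vect k I) :
  bilinear_for (GRing.Scale.Law.clone _ _ *:%R _) (GRing.Scale.Law.clone _ _ *:%R _)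
    (bilin m).
Proof.
split=> [g|f] c u v /=; rewrite /bilin scaler_sumr -big_split;
  apply: eq_bigr => i _ /=; rewrite scaler_sumr -big_split;
  apply: eq_bigr => j _ /=; rewrite !ffunE.
  by rewrite mulrDl scalerDl scalerA -scalerAl.
by rewrite mulrDr scalerDl scalerA -scalerAr.
Qed.

End Coordinates.
Arguments delta_vec {k I} i.

HB.instance Definition _ (k : fieldType) (I : finType) (m : I -> I -> vect k I) :=
  bilinear_isBilinear.Build k (vect k I) (vect k I) (vect k I) _ _ (bilin m)
    (bilin_is_bilinear m).
HB.instance Definition _ (k : fieldType) (I : finType) (m : I -> I -> vect k I) :=
  bilinear_isBilinear.Build k (vect k I) (vect k I) (vect k I) _ _ (amul m)
    (bilin_is_bilinear m).
HB.instance Definition _ (k : fieldType) (I : finType) (m : I -> I -> vect k I) :=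
  bilinear_isBilinear.Build k (vect k (I * I)) (vect k (I * I)) (vect k (I * I)) _ _
    (tmul m) (bilin_is_bilinear _).

Section BasisExtension.
Variables (k : fieldType) (I J : finType).


Lemma bilin_delta (m : I -> I -> vect k I) i j :
  bilin m (delta_vec i) (delta_vec j) = m i j.
Proof.
rewrite /bilin -[RHS](sum_delta_scale (m ^~ j) i); apply: eq_bigr => i' _.
rewrite -[m i' j](sum_delta_scale (m i') j) scaler_sumr; apply: eq_bigr => j' _.
by rewrite !ffunE scalerA.
Qed.

Lemma bilin_assoc (m : I -> I -> vect k I) :
  (forall i j l, bilin m (m i j) (delta_vec l) = bilin m (delta_vec i) (m j l)) ->
  associative (bilin m).
Proof.
move=> mA.
(* [bilin m u v] is itself a sum, so the sums to split are given explicitly. *)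
have A1 i j h : bilin m (bilin m (delta_vec i) (delta_vec j)) h =
                bilin m (delta_vec i) (bilin m (delta_vec j) h).
  rewrite bilin_delta (vect_delta_expand h) [in LHS]linear_sumr.
  rewrite [bilin m (delta_vec j) _]linear_sumr [in RHS]linear_sumr.
  by apply: eq_bigr => l _; rewrite !linearZr_LR /= bilin_delta mA.
have A2 i g h : bilin m (bilin m (delta_vec i) g) h =
                bilin m (delta_vec i) (bilin m g h).
  rewrite (vect_delta_expand g) [bilin m (delta_vec i) _]linear_sumr.
  rewrite [in LHS]linear_sumlz [bilin m (\sum_j _) h]linear_sumlz [in RHS]linear_sumr.
  apply: eq_bigr => j _.
  by rewrite linearZr_LR !linearZl_LR linearZr_LR /= A1.
move=> f g h; rewrite (vect_delta_expand f) [bilin m (\sum_i _) g]linear_sumlz.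
rewrite !linear_sumlz; apply: eq_bigr => i _.
by rewrite !linearZl_LR /= A2.
Qed.

Lemma bilin_central (m : I -> I -> vect k I) c :
  (forall i, bilin m c (delta_vec i) = bilin m (delta_vec i) c) ->
  forall u, bilin m c u = bilin m u c.
Proof.
move=> cC u; rewrite (vect_delta_expand u) linear_sumr linear_sumlz.
by apply: eq_bigr => i _; rewrite linearZr_LR linearZl_LR /= cC.
Qed.

Lemma linext_multiplicative (mI : I -> I -> vect k I) (mJ : J -> J -> vect k J)
    (F : I -> vect k J) :
  (forall i j, linext F (mI i j) = bilin mJ (F i) (F j)) ->
  forall f g, linext F (bilin mI f g) = bilin mJ (linext F f) (linext F g).
Proof.
move=> FM f g; rewrite [in LHS]/bilin [in RHS]/linext linear_sum linear_sumlz.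
apply: eq_bigr => i _; rewrite linear_sum linearZl_LR [in RHS]linear_sumr /= scaler_sumr.
by apply: eq_bigr => j _; rewrite linearZ linearZr_LR /= FM scalerA.
Qed.

Lemma sum_linext_weight (F : I -> vect k J) f (w : J -> k) :
  \sum_x linext F f x * w x = \sum_i f i * \sum_x F i x * w x.
Proof.
rewrite /linext; under eq_bigr do rewrite sum_ffunE mulr_suml.
rewrite exchange_big; apply: eq_bigr => i _; rewrite mulr_sumr.
by apply: eq_bigr => x _; rewrite ffunE mulrA.
Qed.

End BasisExtension.

Section Tensors.
Variables (k : fieldType) (I J : finType).

Lemma tens_is_bilinear :
  bilinear_for (GRing.Scale.Law.clone _ _ *:%R _) (GRing.Scale.Law.clone _ _ *:%R _)
    (@tens k I J).
Proof.
split=> [g|f] c u v; apply/ffunP => p; rewrite !ffunE /=.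
  by rewrite mulrDl -scalerAl.
by rewrite mulrDr -scalerAr.
Qed.
HB.instance Definition _ := bilinear_isBilinear.Build k (vect k I) (vect k J)
  (vect k (I * J)) _ _ (@tens k I J) tens_is_bilinear.

Lemma tens_delta (i : I) (j : J) :
  tens (delta_vec i : vect k I) (delta_vec j : vect k J) = delta_vec (i, j).
Proof. by apply/ffunP => -[x y]; rewrite !ffunE /= xpair_eqE -natrM mulnb. Qed.

End Tensors.

Section TensorMaps.
Variables (k : fieldType) (I J : finType).

Lemma tmap_is_linear (phi : vect k I -> vect k J) : linear (tmap phi).
Proof.
move=> c s t; rewrite /tmap scaler_sumr -big_split; apply: eq_bigr => p _ /=.
by rewrite !ffunE scalerDl scalerA.
Qed.
HB.instance Definition _ phi := GRing.isLinear.Build k (vect k (I * I))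
  (vect k (J * J)) _ (tmap phi) (tmap_is_linear phi).

Lemma tmap_tens_delta (phi : vect k I -> vect k J) (i j : I) :
  tmap phi (tens (delta_vec i) (delta_vec j)) =
  tens (phi (delta_vec i)) (phi (delta_vec j)).
Proof.
rewrite tens_delta /tmap.
pose G (p : I * I) := tens (phi (delta_vec p.1)) (phi (delta_vec p.2)).
rewrite -[RHS]/(G (i, j)) -(sum_delta_scale G (i, j)).
by apply: eq_bigr => p _; rewrite ffunE.
Qed.

Lemma tmul_tens_delta (m : I -> I -> vect k I) (i j i' j' : I) :
  tmul m (tens (delta_vec i) (delta_vec j)) (tens (delta_vec i') (delta_vec j')) =
  tens (amul m (delta_vec i) (delta_vec i')) (amul m (delta_vec j) (delta_vec j')).
Proof. by rewrite !tens_delta /tmul /amul !bilin_delta. Qed.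

End TensorMaps.

(* The exponent normalisation of Z: [redW n] for wH_{4n}, reduction modulo 2n
   for H_{4n}. *)
Record exponent_reduction (k : fieldType) (q : k) (N : nat) (red : nat -> nat) :
    Prop := {
  red_lt : forall m, (red m < N)%N;
  red_small : forall i, (i < N)%N -> red i = i;
  red_addn : forall x y, red (red x + red y)%N = red (x + y)%N;
  expr_red : forall m, q ^+ red m = q ^+ m }.

Section Monomials.
Variables (k : fieldType) (q : k) (N : nat) (red : nat -> nat).
Hypothesis redP : exponent_reduction q N red.
Local Notation I := ('I_N * bool)%type.

Definition mon (m : nat) (b : bool) : vect k I :=
  [ffun p : I => (((p.1 : nat) == red m) && (p.2 == b))%:R].

Definition mon_mult (i j : I) : vect k I :=
  if i.2 && j.2 then 0 else (q ^- (i.2 * j.1)%N) *: mon (i.1 + j.1) (i.2 || j.2).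

Local Notation mul := (amul mon_mult).
Local Notation pow := (apow mon_mult (mon 0 false)).

Lemma mon_delta m b : mon m b = delta_vec (Ordinal (red_lt redP m), b).
Proof. by apply/ffunP => -[x c]; rewrite !ffunE. Qed.

Lemma delta_mon (i : I) : delta_vec i = mon i.1 i.2.
Proof.
case: i => x c; rewrite mon_delta; congr (delta_vec (_, _)); apply: val_inj.
by rewrite /= (red_small redP).
Qed.

Lemma eq_mon x y b : red x = red y -> mon x b = mon y b.
Proof. by rewrite /mon => ->. Qed.

Lemma mon_red m b : mon (red m) b = mon m b.
Proof. by apply: eq_mon; rewrite (red_small redP) ?(red_lt redP). Qed.

Lemma mul_mon x y b c : mul (mon x b) (mon y c) =
  if b && c then 0 else q ^- (b * y) *: mon (x + y) (b || c).
Proof.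
rewrite !mon_delta /amul bilin_delta /mon_mult /=; case: ifP => // _.
have -> : q ^- (b * red y) = q ^- (b * y) by case: b; rewrite ?mul1n ?(expr_red redP).
by rewrite (eq_mon _ (red_addn redP x y)).
Qed.

Lemma mul_mon0 x y c : mul (mon x false) (mon y c) = mon (x + y) c.
Proof. by rewrite mul_mon /= mul0n expr0 invr1 scale1r. Qed.

Lemma mul_mon10 x y : mul (mon x true) (mon y false) = q ^- y *: mon (x + y) true.
Proof. by rewrite mul_mon /= mul1n. Qed.

Lemma mul_mon11 x y : mul (mon x true) (mon y true) = 0.
Proof. by rewrite mul_mon. Qed.

Lemma mon_mul1l f : mul (mon 0 false) f = f.
Proof.
rewrite {1}(vect_delta_expand f) /amul linear_sumr [RHS]vect_delta_expand.
by apply: eq_bigr => i _; rewrite linearZr_LR /= delta_mon -/(amul _ _ _) mul_mon0.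
Qed.

Lemma mon_mul1r f : mul f (mon 0 false) = f.
Proof.
rewrite {1}(vect_delta_expand f) /amul linear_sumlz [RHS]vect_delta_expand.
apply: eq_bigr => i _; rewrite linearZl_LR /= delta_mon -/(amul _ _ _) mul_mon.
by rewrite andbF muln0 expr0 invr1 scale1r addn0 orbF.
Qed.

Lemma mon_mulA : associative mul.
Proof.
apply: bilin_assoc => -[x b] [y c] [z d]; rewrite /mon_mult /= !delta_mon /=.
case: b; case: c; case: d => /=;
  rewrite ?linear0l ?linear0r ?linearZl_LR ?linearZr_LR /= -?/(amul _ _ _) ?mul_mon /=
    ?scaler0 //;
  rewrite !scalerA addnA ?mul1n ?mul0n ?expr0 ?invr1 ?mul1r ?mulr1 //.
by rewrite exprD invfM.
Qed.

Lemma mon_pow x e : pow (mon x false) e = mon (x * e) false.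
Proof. by elim: e => [|e IH]; rewrite ?muln0 //= IH mul_mon0 mulnS addnC. Qed.

Lemma mon_counit m b : \sum_(i : I) mon m b i * (~~ i.2)%:R = (~~ b)%:R.
Proof.
rewrite mon_delta.
rewrite -(sum_delta_scale (fun i : I => ((~~ i.2)%:R : k^o)) (Ordinal (red_lt redP m), b)).
by apply: eq_bigr => i _; rewrite ffunE.
Qed.

Lemma tmul_tens_mon x y b c x' y' b' c' :
  tmul mon_mult (tens (mon x b) (mon y c)) (tens (mon x' b') (mon y' c')) =
  tens (mul (mon x b) (mon x' b')) (mul (mon y c) (mon y' c')).
Proof. by rewrite !mon_delta tmul_tens_delta. Qed.

Variables (a : k) (n s : nat).
Local Notation Z := (mon 1 false).
Local Notation X := (mon 0 true).
Local Notation one := (mon 0 false).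

Definition coprod_Z := tens Z Z + (a * (1 - q ^- 2)) *: tens (mul (pow Z n.+1) X) (mul Z X).
Definition coprod_X := tens X one + tens (pow Z n) X.
Definition coprod_coef m := a * (1 - q ^- (2 * m)).

Lemma coprod_Z_mon : coprod_Z =
  tens (mon 1 false) (mon 1 false) +
  (a * (1 - q ^- 2)) *: tens (mon n.+1 true) (mon 1 true).
Proof. by rewrite /coprod_Z !mon_pow !mul_mon0 mul1n !addn0. Qed.

Lemma coprod_X_mon : coprod_X = tens (mon 0 true) one + tens (mon n false) (mon 0 true).
Proof. by rewrite /coprod_X mon_pow mul1n. Qed.

Lemma tpow_coprod_Z m : tpow mon_mult one coprod_Z m =
  tens (mon m false) (mon m false) + coprod_coef m *: tens (mon (m + n) true) (mon m true).
Proof.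
elim: m => [|m IH].
  by rewrite /coprod_coef muln0 expr0 invr1 subrr mulr0 scale0r addr0.
have -> : tpow mon_mult one coprod_Z m.+1 =
          tmul mon_mult coprod_Z (tpow mon_mult one coprod_Z m) by [].
rewrite IH coprod_Z_mon linearDl !linearDr !linearZl_LR !linearZr_LR /= !tmul_tens_mon.
rewrite !mul_mon0 mul_mon11 linear0l !scaler0 addr0 !mul_mon10.
rewrite linearZl_LR linearZr_LR /= !scalerA.
have -> : (n.+1 + m = 1 + (m + n))%N by lia.
rewrite -addrA -scalerDl !add1n addSn; congr (_ + _ *: _).
(* As X^2 = 0, coprod_coef m.+1 = coprod_coef m + coprod_coef 1 * q^(-2m). *)
rewrite /coprod_coef -!exprVn mulnS exprD [(2 * m)%N]mulnC exprM.
ring.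
Qed.

Definition coprod_mon_form x (b : bool) :=
  if b then tens (mon x true) (mon x false) + tens (mon (x + n) false) (mon x true)
  else tens (mon x false) (mon x false) +
       coprod_coef x *: tens (mon (x + n) true) (mon x true).

Lemma coprod_mon x (b : bool) :
  tmul mon_mult (tpow mon_mult one coprod_Z x) (tpow mon_mult one coprod_X b) =
  coprod_mon_form x b.
Proof.
rewrite tpow_coprod_Z /coprod_mon_form; case: b => /=; rewrite ?coprod_X_mon.
all: rewrite !(linearDl, linearDr, linearZl_LR, linearZr_LR) /=.
all: rewrite !tmul_tens_mon !mon_mul1r //.
rewrite !tmul_tens_mon !mul_mon /= ?(mul0n, muln0, addn0, expr0, invr1, scale1r).
by rewrite linear0l linear0r !scaler0 !addr0.
Qed.

Definition antipode_mon_form x (b : bool) :=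
  if b then - (q ^- (s * x) *: mon (n + s * x) true) else mon (s * x) false.

Lemma antipode_mon x (b : bool) :
  mul (pow (- mul (pow Z n) X) b) (pow (pow Z s) x) = antipode_mon_form x b.
Proof.
rewrite !mon_pow !mul1n /antipode_mon_form; case: b => /=; last by rewrite mul_mon0.
by rewrite mon_mul1r mul_mon0 addn0 linearNl /= mul_mon10.
Qed.

End Monomials.

Section Reductions.
Variables (k : fieldType) (n : nat) (q : k).
Hypotheses (n_gt0 : (0 < n)%N) (q2n : q ^+ (2 * n) = 1).

Lemma redW_mod m : redW n m = m %[mod 2 * n].
Proof. by case: m => // m; rewrite /redW /= -addn1 modnDml addn1. Qed.

Lemma redW_gt0 m : (0 < m)%N -> (0 < redW n m)%N.
Proof. by case: m. Qed.

Lemma redW_eq x y :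
  (0 < x)%N -> (0 < y)%N -> x = y %[mod 2 * n] -> redW n x = redW n y.
Proof.
case: x => // x; case: y => // y _ _ xy; rewrite /redW /=; congr S.
by apply/eqP; move/eqP: xy; rewrite -(addn1 x) -(addn1 y) eqn_modDr.
Qed.

Lemma eq_expr_mod x y : x = y %[mod 2 * n] -> q ^+ x = q ^+ y.
Proof. by move=> xy; rewrite -(expr_mod x q2n) xy expr_mod. Qed.

Lemma muln_redW_mod s m : (s * redW n m = s * m %[mod 2 * n])%N.
Proof. by rewrite -modnMmr redW_mod modnMmr. Qed.

Lemma redW_reduction : exponent_reduction q (2 * n).+1 (redW n).
Proof.
have lt m : (redW n m < (2 * n).+1)%N.
  by case: m => // m; rewrite /redW /= ltnS ltn_pmod ?muln_gt0.
have small i : (i < (2 * n).+1)%N -> redW n i = i.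
  by case: i => // i; rewrite ltnS /redW /= => /modn_small ->.
split=> // [x y|m]; last by apply: eq_expr_mod; rewrite redW_mod.
case: x => [|x]; case: y => [|y]; rewrite ?add0n ?addn0 ?(small _ (lt _)) //.
by apply: redW_eq; rewrite // -modnDm !redW_mod modnDm.
Qed.

Lemma modn_reduction : exponent_reduction q (2 * n) (modn^~ (2 * n)).
Proof.
split=> [m|i|x y|m]; last exact: expr_mod.
- by rewrite ltn_pmod ?muln_gt0.
- exact: modn_small.
- exact: modnDm.
Qed.

End Reductions.

Lemma dvdp_X2 (F : fieldType) (p : {poly F}) :
  ('X^2 %| p) = (p`_0 == 0) && (p`_1 == 0).
Proof.
apply/idP/andP=> [/dvdpP[r ->] | [/eqP p0 /eqP p1]]; first by rewrite !coefMXn.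
have p2 : take_poly 2 p = 0.
  by apply/polyP => -[|[|i]]; rewrite coef_take_poly coef0.
by rewrite -(poly_take_drop 2 p) p2 add0r dvdp_mull.
Qed.

HB.instance Definition _ (k : fieldType) n (q : k) :=
  bilinear_isBilinear.Build k (vect k (WI n)) (vect k (WI n)) (vect k (WI n)) _ _
    (mulW q) (bilin_is_bilinear _).

Section wH.
Variables (k : fieldType) (n : nat) (q : k).
Hypotheses (n_gt0 : (0 < n)%N) (q2n : q ^+ (2 * n) = 1).
Let redWP := redW_reduction n_gt0 q2n.
Local Notation MW := (@mon k (2 * n).+1 (redW n)).
Local Notation mul := (@mulW k n q).
Local Notation J := (JW n q).

Lemma mulW_mon x y b c : mul (MW x b) (MW y c) =
  if b && c then 0 else q ^- (b * y) *: MW (x + y) (b || c).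
Proof. exact: (mul_mon redWP). Qed.

Lemma mulWA : associative mul.
Proof. exact: (mon_mulA redWP). Qed.

Lemma mul1W : left_id (oneW k n) mul.
Proof. exact: (mon_mul1l redWP). Qed.

Lemma mulW1 : right_id (oneW k n) mul.
Proof. exact: (mon_mul1r redWP). Qed.

Lemma JW_mon : J = MW (2 * n) false.
Proof. by rewrite /JW /powW (mon_pow redWP) mul1n. Qed.

Lemma mulW_J (i : WI n) : mul (delta_vec i) J = MW (i.1 + 2 * n) i.2.
Proof.
rewrite JW_mon (delta_mon redWP) mulW_mon andbF orbF.
by case: i.2; rewrite ?mul1n ?q2n ?mul0n ?expr0 invr1 scale1r.
Qed.

Lemma J_central u : mul J u = mul u J.
Proof.
apply: bilin_central => i; change (mul J (delta_vec i) = mul (delta_vec i) J).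
by rewrite mulW_J JW_mon (delta_mon redWP) mulW_mon /= mul0n expr0 invr1 scale1r addnC.
Qed.

Lemma J_idem : mul J J = J.
Proof.
rewrite JW_mon mulW_mon /= mul0n expr0 invr1 scale1r.
by apply: eq_mon; apply: redW_eq; rewrite ?muln_gt0 ?addn_gt0 ?muln_gt0 ?n_gt0 // modnDl.
Qed.

Lemma subJ_central u : mul (oneW k n - J) u = mul u (oneW k n - J).
Proof. by rewrite linearBl linearBr /= mul1W mulW1 J_central. Qed.

Lemma central_ideal c : (forall u, mul c u = mul u c) ->
  is_ideal q (fun v => exists w, v = mul w c).
Proof.
move=> cC; split.
- by exists 0; rewrite linear0l.
- by move=> _ _ [u ->] [v ->]; exists (u + v); rewrite linearDl.
- by move=> x _ [v ->]; exists (x *: v); rewrite linearZl_LR.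
move=> u _ [w ->]; split; first by exists (mul u w); rewrite mulWA.
by exists (mul w u); rewrite -mulWA cC mulWA.
Qed.

Lemma w1_w2_trivial (v : vect k (WI n)) : w1 q v -> w2 q v -> v = 0.
Proof.
move=> [w ->] [w' vE].
have KJ : mul (oneW k n - J) J = 0 by rewrite linearBl /= mul1W J_idem subrr.
have vJ : mul w J = mul (mul w J) J by rewrite -mulWA J_idem.
by rewrite vJ {1}vE -mulWA KJ linear0r.
Qed.

Let modnP := modn_reduction n_gt0 q2n.
Local Notation MH := (@mon k (2 * n) (modn^~ (2 * n))).

Definition embH : vect k (HI n) -> vect k (WI n) :=
  linext (fun i : HI n => MW (i.1 + 2 * n) i.2).
Definition projW : vect k (WI n) -> vect k (HI n) :=
  linext (fun i : WI n => MH i.1 i.2).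

HB.instance Definition _ := GRing.Linear.on embH.
HB.instance Definition _ := GRing.Linear.on projW.

Lemma embH_delta i : embH (delta_vec i) = MW (i.1 + 2 * n) i.2.
Proof. exact: linext_delta. Qed.

Lemma embH_mon m b : embH (MH m b) = MW (m + 2 * n) b.
Proof.
rewrite (mon_delta modnP) embH_delta; apply: eq_mon.
by apply: redW_eq; rewrite ?addn_gt0 ?muln_gt0 ?n_gt0 ?orbT // modnDml.
Qed.

Lemma embHK : cancel embH projW.
Proof.
apply: (eq_linear_delta (A := projW \o embH) (B := idfun)) => i.
change (projW (embH (delta_vec i)) = delta_vec i).
rewrite embH_delta (mon_delta redWP) /projW linext_delta (delta_mon modnP) /=.
by apply: eq_mon; rewrite redW_mod modnDr.
Qed.

Lemma embH_one : embH (oneH k n) = J.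
Proof. by rewrite JW_mon; exact: (embH_mon 0 false). Qed.

Lemma embH_mul f g : embH (mulH q f g) = mul (embH f) (embH g).
Proof.
apply: linext_multiplicative => i j.
change (embH (multH q i j) = mul (MW (i.1 + 2 * n) i.2) (MW (j.1 + 2 * n) j.2)).
rewrite mulW_mon /multH; case: ifP => _; first exact: linear0.
rewrite linearZ /= embH_mon; congr (_ *: _).
  by case: i.2; rewrite ?mul0n ?mul1n // (eq_expr_mod q2n (modnDr _ _)).
apply: eq_mon; apply: redW_eq; rewrite ?addn_gt0 ?muln_gt0 ?n_gt0 ?orbT //.
by rewrite addnACA addnA !modnDr.
Qed.

Lemma mulW_J_embH w : mul w J = embH (projW w).
Proof.
rewrite (vect_delta_expand w) linear_sumlz !linear_sum; apply: eq_bigr => i _.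
by rewrite linearZl_LR !linearZ /= mulW_J -vect_delta_expand embH_mon.
Qed.

Lemma w1_embH v : w1 q v <-> exists h, v = embH h.
Proof.
split=> [[w ->]|[h ->]]; first by exists (projW w); exact: mulW_J_embH.
have mulH1 : right_id (oneH k n) (mulH q) by exact: (mon_mul1r modnP).
by exists (embH h); rewrite -embH_one -embH_mul mulH1.
Qed.

Lemma embH_counit f : epsW (embH f) = epsH f.
Proof.
rewrite /epsW /embH sum_linext_weight; apply: eq_bigr => i _.
by rewrite (mon_counit redWP).
Qed.

Variable a : k.

Lemma DeltaW_mon m b :
  DeltaW q a (MW m b) = coprod_mon_form q (2 * n).+1 (redW n) a n (redW n m) b.
Proof. by rewrite (mon_delta redWP) /DeltaW linext_delta; exact: (coprod_mon redWP). Qed.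

Lemma DeltaH_delta i :
  DeltaH q a (delta_vec i) = coprod_mon_form q (2 * n) (modn^~ (2 * n)) a n i.1 i.2.
Proof. by rewrite /DeltaH linext_delta; exact: (coprod_mon modnP). Qed.

Lemma tmap_embH_tens x y b c :
  tmap embH (tens (MH x b) (MH y c)) = tens (MW (x + 2 * n) b) (MW (y + 2 * n) c).
Proof. by rewrite !(mon_delta modnP) tmap_tens_delta -!(mon_delta modnP) !embH_mon. Qed.

Lemma embH_coprod f : DeltaW q a (embH f) = tmap embH (DeltaH q a f).
Proof.
apply: (eq_linear_delta (A := DeltaW q a \o embH) (B := tmap embH \o DeltaH q a)).
move=> [j b].
change (DeltaW q a (embH (delta_vec (j, b))) = tmap embH (DeltaH q a (delta_vec (j, b)))).
rewrite embH_delta DeltaW_mon DeltaH_delta /coprod_mon_form /=.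
have r1 c : MW (redW n (j + 2 * n)) c = MW (j + 2 * n) c by exact: (mon_red redWP).
have r2 c : MW (redW n (j + 2 * n) + n) c = MW (j + n + 2 * n) c.
  apply: eq_mon; apply: redW_eq; rewrite ?addn_gt0 ?n_gt0 ?orbT //.
  by rewrite -modnDml redW_mod modnDml addnAC.
have r3 : coprod_coef q a (redW n (j + 2 * n)) = coprod_coef q a j.
  rewrite /coprod_coef; congr (a * (1 - _^-1)); apply: (eq_expr_mod q2n).
  by rewrite muln_redW_mod mulnDr addnC modnMDl.
by case: b; rewrite linearD ?linearZ /= !tmap_embH_tens !r1 !r2 ?r3.
Qed.

Lemma TW_mon m b :
  TW q (MW m b) = antipode_mon_form q (2 * n).+1 (redW n) n (2 * n).-1 (redW n m) b.
Proof. by rewrite (mon_delta redWP) /TW linext_delta; exact: (antipode_mon redWP). Qed.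

Lemma SH_delta i :
  SH q (delta_vec i) = antipode_mon_form q (2 * n) (modn^~ (2 * n)) n (2 * n).-1 i.1 i.2.
Proof. by rewrite /SH linext_delta; exact: (antipode_mon modnP). Qed.

Lemma embH_antipode f : TW q (embH f) = embH (SH q f).
Proof.
apply: (eq_linear_delta (A := TW q \o embH) (B := embH \o SH q)).
move=> [j b]; change (TW q (embH (delta_vec (j, b))) = embH (SH q (delta_vec (j, b)))).
rewrite embH_delta TW_mon SH_delta /antipode_mon_form /=.
have s_gt0 : (0 < (2 * n).-1)%N by lia.
have sj : ((2 * n).-1 * redW n (j + 2 * n) = (2 * n).-1 * j %[mod 2 * n])%N.
  by rewrite muln_redW_mod mulnDr addnC modnMDl.
case: b; rewrite ?linearN ?linearZ /= embH_mon.
  congr (_ *: - _); first by congr (_^-1); apply: (eq_expr_mod q2n).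
  apply: eq_mon; apply: redW_eq; rewrite ?addn_gt0 ?n_gt0 //.
  by rewrite modnDr -modnDmr sj modnDmr.
apply: eq_mon; apply: redW_eq; rewrite ?muln_gt0 ?addn_gt0 ?s_gt0 ?n_gt0 ?orbT //=.
  by rewrite redW_gt0 ?addn_gt0 ?muln_gt0 ?n_gt0 ?orbT.
by rewrite modnDr sj.
Qed.

Definition YW := MW 0 true - MW (2 * n) true.
Definition emb_dual (p : {poly k}) : vect k (WI n) := p`_0 *: (oneW k n - J) + p`_1 *: YW.

Lemma emb_dual_is_linear : linear emb_dual.
Proof.
move=> c p r; rewrite /emb_dual !coefD !coefZ !scalerDl !scalerDr !scalerA.
by rewrite addrACA.
Qed.
HB.instance Definition _ :=
  GRing.isLinear.Build k {poly k} (vect k (WI n)) _ emb_dual emb_dual_is_linear.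

Lemma emb_dual_one : emb_dual 1 = oneW k n - J.
Proof. by rewrite /emb_dual !coef1 /= scale1r scale0r addr0. Qed.

Lemma emb_dual_mul p r : emb_dual (p * r) = mul (emb_dual p) (emb_dual r).
Proof.
have MM b : MW (2 * n + 2 * n) b = MW (2 * n) b.
  by apply: eq_mon; apply: redW_eq; rewrite ?addn_gt0 ?muln_gt0 ?n_gt0 // modnDr.
have q2n' : q ^- (2 * n) = 1 by rewrite q2n invr1.
have KK : mul (oneW k n - J) (oneW k n - J) = oneW k n - J.
  rewrite JW_mon linearBl !linearBr /= !mulW_mon /= !mul0n expr0 invr1 !scale1r.
  by rewrite !add0n !addn0 MM subrr subr0.
have KY : mul (oneW k n - J) YW = YW.
  rewrite /YW JW_mon linearBl !linearBr /= !mulW_mon /= !mul0n expr0 invr1 !scale1r.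
  by rewrite !add0n !addn0 MM subrr subr0.
have YK : mul YW (oneW k n - J) = YW.
  rewrite /YW JW_mon linearBl !linearBr /= !mulW_mon /= !mul1n q2n' expr0 invr1 !scale1r.
  by rewrite !add0n !addn0 MM subrr subr0.
have YY : mul YW YW = 0 by rewrite linearBl !linearBr /= !mulW_mon /= !subrr.
rewrite /emb_dual !coefM big_ord1 big_ord_recl big_ord1 /=.
move: KK KY YK YY; generalize (oneW k n - J) YW => K Y KK KY YK YY.
rewrite !(linearDl, linearDr, linearZl_LR, linearZr_LR) /= KK KY YK YY.
rewrite /bump /= !subn0 subnn addn0 !scaler0 addr0 !scalerA.
by rewrite scalerDl addrA [p`_1 * _]mulrC.
Qed.

(* Z^j X^b (1 - J) is 1 - J, Y or 0, as y^(2j+b) is 1, y or 0 modulo y^2. *)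
Lemma mulW_delta_subJ (i : WI n) :
  mul (delta_vec i) (oneW k n - J) = emb_dual 'X^(2 * i.1 + i.2).
Proof.
rewrite JW_mon (delta_mon redWP) linearBr /= !mulW_mon !andbF !orbF muln0 addn0.
have -> : q ^- (i.2 * (2 * n)) = 1 by case: i.2; rewrite ?mul1n ?q2n ?mul0n ?expr0 invr1.
rewrite expr0 invr1 !scale1r /emb_dual /YW JW_mon !coefXn.
case: i => [[[|j] lt] b] /=; first by case: b; rewrite ?scale1r ?scale0r ?addr0 ?add0r.
have -> : (1 == 2 * j.+1 + b)%N = false by apply/eqP; lia.
rewrite !scale0r addr0; apply/eqP; rewrite subr_eq0; apply/eqP.
by apply: eq_mon; apply: redW_eq; rewrite ?addn_gt0 // modnDr.
Qed.

Lemma w2_emb_dual v : w2 q v <-> exists p, v = emb_dual p.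
Proof.
split=> [[w ->]|[p ->]]; last first.
  by exists (emb_dual p); rewrite -emb_dual_one -emb_dual_mul mulr1.
exists (\sum_i w i *: 'X^(2 * i.1 + i.2)).
rewrite (vect_delta_expand w) linear_sumlz linear_sum; apply: eq_bigr => i _.
by rewrite linearZl_LR linearZ /= mulW_delta_subJ -vect_delta_expand.
Qed.

Lemma emb_dual_ord0 p (b : bool) : emb_dual p (ord0, b) = if b then p`_1 else p`_0.
Proof.
have r2n : redW n (2 * n) = (2 * n)%N by rewrite (red_small redWP).
have n2n : (0 == 2 * n)%N = false by apply/eqP; lia.
rewrite /emb_dual /YW JW_mon !ffunE /= r2n n2n.
by case: b => /=; rewrite !subr0 scaler0 ?add0r ?addr0; apply: mulr1.
Qed.

Lemma emb_dual_eq0 p : emb_dual p = 0 <-> ('X^2 %| p)%R.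
Proof.
rewrite dvdp_X2; split=> [/ffunP p0 | /andP[/eqP p0 /eqP p1]].
  move: (p0 (ord0, false)) (p0 (ord0, true)).
  by rewrite !emb_dual_ord0 !ffunE => -> ->; rewrite eqxx.
by rewrite /emb_dual p0 p1 !scale0r addr0.
Qed.

End wH.

Theorem proposition3p2 (k : closedFieldType) (n : nat) (q a : k) :
  [pchar k] =i pred0 -> (1 <= n)%N -> (2 * n)%N.-primitive_root q -> a != 0 ->
  [/\
   (* wH_{4n} = w1 (+) w2 *)
   (forall v : vect k (WI n), exists v1 v2, [/\ w1 q v1, w2 q v2 & v = v1 + v2]),
   (forall v : vect k (WI n), w1 q v -> w2 q v -> v = 0),
   (* both summands are two-sided ideals *)
   @is_ideal k n q (@w1 k n q) /\ @is_ideal k n q (@w2 k n q),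
   (* w1 (unit J, restricted Delta, epsilon, antipode) is isomorphic to H_{4n}
      as Hopf algebras *)
   (exists phi : vect k (HI n) -> vect k (WI n),
      [/\ [/\ (forall (c : k) f g, phi (c *: f + g) = c *: phi f + phi g),
              injective phi &
              (forall v, w1 q v <-> exists h, v = phi h)],
          (* algebra map, sending 1 to the unit J of w1 *)
          phi (oneH k n) = JW n q /\
          (forall f g, phi (mulH q f g) = mulW q (phi f) (phi g)) &
          (* compatible with comultiplication, counit and antipode *)
          [/\ (forall f, DeltaW q a (phi f) = tmap phi (DeltaH q a f)),
              (forall f, epsW (phi f) = epsH f) &
              (forall f, TW q (phi f) = phi (SH q f))]])
   & (* w2 is isomorphic to k[y]/(y^2) as algebras *)
   (exists psi : {poly k} -> vect k (WI n),
      [/\ (forall (c : k) p r, psi (c *: p + r) = c *: psi p + psi r),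
          psi 1 = oneW k n - JW n q,
          (forall p r, psi (p * r) = mulW q (psi p) (psi r)),
          (forall v, w2 q v <-> exists p, v = psi p) &
          (forall p, psi p = 0 <-> ('X^2 %| p)%R)])].
Proof.
move=> _ n_gt0 q_prim _; have q2n := prim_expr_order q_prim.
split.
- move=> v; exists (mulW q v (JW n q)), (mulW q v (oneW k n - JW n q)).
  by split; [exists v | exists v | rewrite -linearDr addrC subrK /= mulW1].
- exact: w1_w2_trivial.
- by split; apply: central_ideal => //; [exact: J_central | exact: subJ_central].
- exists (@embH k n); split; [split | split | split].
  + exact: linearP.
  + exact: can_inj (embHK n_gt0 q2n).
  + exact: w1_embH.
  + exact: embH_one.
  + exact: embH_mul.
  + exact: embH_coprod.
  + exact: (embH_counit n_gt0 q2n).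
  + exact: embH_antipode.
- exists (emb_dual n q); split.
  + exact: linearP.
  + exact: emb_dual_one.
  + exact: emb_dual_mul.
  + exact: w2_emb_dual.
  + exact: emb_dual_eq0.
Qed.
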